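(* Let $\kappa\ge0$, $\alpha\ge0$, $p,q\in[1,\infty]$, $\varepsilon,\widehat\varepsilon\ge0$, training points $(\boldsymbol x^i,y^i)$, $i\in[N]$, and auxiliary points $(\widehat{\boldsymbol x}^j,\widehat y^j)$, $j\in[\widehat N]$, be given. Consider the convex program (Inter-ARO$^\star$): $$\inf\ \varepsilon\lambda+\widehat\varepsilon\widehat\lambda+\frac1N\sum_{i=1}^N s_i+\frac1{\widehat N}\sum_{j=1}^{\widehat N}\widehat s_j$$ over $\boldsymbol\beta\in\mathbb{R}^n$, $\lambda\ge0$, $\widehat\lambda\ge0$, $\boldsymbol s\in\mathbb{R}^N_+$, $\widehat{\boldsymbol s}\in\mathbb{R}^{\widehat N}_+$, $\boldsymbol z^{l}_{ij}\in\mathbb{R}^n$ for $(i,j,l)\in[N]\times[\widehat N]\times\{-1,1\}$, subject to, for all $(i,j,l)\in[N]\times[\widehat N]\times\{-1,1\}$: $$L^\alpha\big(l\,\boldsymbol\beta^\top\boldsymbol x^i+(\boldsymbol z^l_{ij})^\top(\widehat{\boldsymbol x}^j-\boldsymbol x^i)\big)\le s_i+\frac{\kappa(1-ly^i)}2\lambda+\widehat s_j+\frac{\kappa(1-l\widehat y^j)}2\widehat\lambda,$$ $$\|l\boldsymbol\beta-\boldsymbol z^l_{ij}\|_{q^\star}\le\lambda,\qquad \|\boldsymbol z^l_{ij}\|_{q^\star}\le\widehat\lambda,$$ where $L^\alpha(z)=\log(1+\exp(-z+\alpha\|\boldsymbol\beta\|_{p^\star}))$. Then for every feasible point $(\boldsymbol\beta,\lambda,\widehat\lambda,\boldsymbol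 s,\widehat{\boldsymbol s},(\boldsymbol z^l_{ij}))$ of this program, $(\boldsymbol\beta,\lambda,\widehat\lambda,\boldsymbol s,\widehat{\boldsymbol s})$ satisfies all constraints of the semi-infinite program $$\sup_{\boldsymbol x\in\mathbb{R}^n}\{\ell^\alpha_{\boldsymbol\beta}(\boldsymbol x,l)-\lambda\|\boldsymbol x^i-\boldsymbol x\|_q-\widehat\lambda\|\widehat{\boldsymbol x}^j-\boldsymbol x\|_q\}\le s_i+\tfrac{\kappa(1-ly^i)}{2}\lambda+\widehat s_j+\tfrac{\kappa(1-l\widehat y^j)}{2}\widehat\lambda\ \ \forall (i,j,l),$$ and $\mathbb{E}_{\mathbb{Q}}[\ell^\alpha_{\boldsymbol\beta}(\boldsymbol x,y)]\le\varepsilon\lambda+\widehat\varepsilon\widehat\lambda+\frac1N\sum_i s_i+\frac1{\widehat N}\sum_j\widehat s_j$ for every $\mathbb{Q}\in\mathfrak B_\varepsilon(\mathbb{P}_N)\cap\mathfrak B_{\widehat\varepsilon}(\widehat{\mathbb{P}}_{\widehat N})$. In particular the optimal value of Inter-ARO$^\star$ is at least the optimal value of (Inter-ARO) $\inf_{\boldsymbol\beta}\sup_{\mathbb{Q}\in\mathfrak B_\varepsilon(\mathbb{P}_N)\cap\mathfrak B_{\widehat\varepsilon}(\widehat{\mathbb{P}}_{\widehat N})}\mathbb{E}_{\mathbb{Q}}[\ell^\alpha_{\boldsymbol\beta}(\boldsymbol x,y)]$.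
   Context: $1/p+1/p^\star=1$, $1/q+1/q^\star=1$. $\ell^\alpha_{\boldsymbol\beta}(\boldsymbol x,y)=\log(1+\exp(-y\boldsymbol\beta^\top\boldsymbol x+\alpha\|\boldsymbol\beta\|_{p^\star}))=L^\alpha(y\boldsymbol\beta^\top\boldsymbol x)$. $\Xi=\mathbb{R}^n\times\{-1,+1\}$ with metric $d((\boldsymbol x,y),(\boldsymbol x',y'))=\|\boldsymbol x-\boldsymbol x'\|_q+\kappa\mathbb 1[y\ne y']$; $\mathrm W$ is the induced type-1 Wasserstein distance on Borel probability measures with finite first moment; $\mathfrak B_\varepsilon(\mathbb{P})=\{\mathbb{Q}:\mathrm W(\mathbb{Q},\mathbb{P})\le\varepsilon\}$; $\mathbb{P}_N=\frac1N\sum_i\delta_{(\boldsymbol x^i,y^i)}$, $\widehat{\mathbb{P}}_{\widehat N}=\frac1{\widehat N}\sum_j\delta_{(\widehat{\boldsymbol x}^j,\widehat y^j)}$. The supremum over an empty set is $-\infty$. *)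

From HB Require Import structures.
From mathcomp Require Import all_boot all_order all_algebra.
From mathcomp Require Import all_classical all_reals all_analysis.

Set Implicit Arguments.
Unset Strict Implicit.
Unset Printing Implicit Defensive.
Import Order.TTheory GRing.Theory Num.Theory.
Import numFieldNormedType.Exports.

Local Open Scope classical_set_scope.
Local Open Scope ring_scope.

Section defs.
Variable R : realType.

(* R^n is represented by n.-tuple R, equipped (by MathComp-Analysis) with the
   product sigma-algebra of Borel sets, i.e. the Borel sigma-algebra of R^n. *)
Definition vsub n (x y : n.-tuple R) : n.-tuple R :=
  [tuple tnth x i - tnth y i | i < n].
Definition vscale n (a : R) (x : n.-tuple R) : n.-tuple R :=
  [tuple a * tnth x i | i < n].
Definition dot n (x y : n.-tuple R) : R := \sum_(i < n) tnth x i * tnth y i.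

Definition pnorm n (p : \bar R) (x : n.-tuple R) : R :=
  match p with
  | EFin r => (\sum_(i < n) `|tnth x i| `^ r) `^ r^-1
  | _ => \big[Num.max/0]_(i < n) `|tnth x i|
  end.

(* Hoelder conjugate exponent: 1/p + 1/p^* = 1 *)
Definition dual_exp (p : \bar R) : \bar R :=
  match p with
  | EFin r => if r == 1 then +oo%E else (r / (r - 1))%:E
  | +oo%E => 1%:E
  | -oo%E => -oo%E
  end.

(* labels {-1,+1} encoded as bool: true = +1, false = -1 *)
Definition lab (b : bool) : R := if b then 1 else -1.

Definition Lalpha n (alpha : R) (p : \bar R) (beta : n.-tuple R) (z : R) : R :=
  ln (1 + expR (- z + alpha * pnorm (dual_exp p) beta)).

Definition ell n (alpha : R) (p : \bar R) (beta : n.-tuple R) (x : n.-tuple R)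
  (y : bool) : R := Lalpha alpha p beta (lab y * dot beta x).

Definition Xi n := (n.-tuple R * bool)%type.

Definition cost n (kappa : R) (q : \bar R) (a b : Xi n) : R :=
  pnorm q (vsub a.1 b.1) + kappa * (a.2 != b.2)%:R.

Definition coupling n (pi : probability (Xi n * Xi n)%type R)
  (Q P : set (Xi n) -> \bar R) : Prop :=
  forall A : set (Xi n), measurable A ->
    pi (A `*` setT) = Q A /\ pi (setT `*` A) = P A.

Definition W n (kappa : R) (q : \bar R) (Q P : set (Xi n) -> \bar R) : \bar R :=
  ereal_inf [set v | exists pi : probability (Xi n * Xi n)%type R,
    coupling pi Q P /\ v = (\int[pi]_z (cost kappa q z.1 z.2)%:E)%E].

Definition finite_first_moment n (kappa : R) (q : \bar R)
  (Q : probability (Xi n) R) : Prop :=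
  exists xi0 : Xi n, (\int[Q]_z (cost kappa q z xi0)%:E < +oo)%E.

Definition empirical n N (xi : 'I_N -> Xi n) : set (Xi n) -> \bar R :=
  fun A => ((N%:R^-1)%:E * \sum_(i < N) \d_(xi i) A)%E.

Definition in_balls n N Nh (kappa : R) (q : \bar R) (eps epsh : R)
  (X : 'I_N -> n.-tuple R) (Y : 'I_N -> bool)
  (Xh : 'I_Nh -> n.-tuple R) (Yh : 'I_Nh -> bool)
  (Q : probability (Xi n) R) : Prop :=
  finite_first_moment kappa q Q /\
  (W kappa q Q (empirical (fun i => (X i, Y i))) <= eps%:E)%E /\
  (W kappa q Q (empirical (fun j => (Xh j, Yh j))) <= epsh%:E)%E.

Definition expect_loss n (alpha : R) (p : \bar R) (beta : n.-tuple R)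
  (Q : probability (Xi n) R) : \bar R :=
  (\int[Q]_z (ell alpha p beta z.1 z.2)%:E)%E.

Definition obj N Nh (eps epsh lam lamh : R) (s : 'I_N -> R) (sh : 'I_Nh -> R) : R :=
  eps * lam + epsh * lamh + N%:R^-1 * \sum_(i < N) s i
  + Nh%:R^-1 * \sum_(j < Nh) sh j.

Definition rhs N Nh (kappa lam lamh : R) (s : 'I_N -> R) (sh : 'I_Nh -> R)
  (Y : 'I_N -> bool) (Yh : 'I_Nh -> bool) (i : 'I_N) (j : 'I_Nh) (l : bool) : R :=
  s i + kappa * (1 - lab l * lab (Y i)) / 2 * lam
  + sh j + kappa * (1 - lab l * lab (Yh j)) / 2 * lamh.

Definition feasible_star n N Nh (kappa alpha : R) (p q : \bar R)
  (X : 'I_N -> n.-tuple R) (Y : 'I_N -> bool)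
  (Xh : 'I_Nh -> n.-tuple R) (Yh : 'I_Nh -> bool)
  (beta : n.-tuple R) (lam lamh : R) (s : 'I_N -> R) (sh : 'I_Nh -> R)
  (z : 'I_N -> 'I_Nh -> bool -> n.-tuple R) : Prop :=
  0 <= lam /\ 0 <= lamh /\ (forall i, 0 <= s i) /\ (forall j, 0 <= sh j) /\
  forall i j l,
    Lalpha alpha p beta
      (lab l * dot beta (X i) + dot (z i j l) (vsub (Xh j) (X i)))
      <= rhs kappa lam lamh s sh Y Yh i j l /\
    pnorm (dual_exp q) (vsub (vscale (lab l) beta) (z i j l)) <= lam /\
    pnorm (dual_exp q) (z i j l) <= lamh.

Definition semi_infinite_feasible n N Nh (kappa alpha : R) (p q : \bar R)
  (X : 'I_N -> n.-tuple R) (Y : 'I_N -> bool)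
  (Xh : 'I_Nh -> n.-tuple R) (Yh : 'I_Nh -> bool)
  (beta : n.-tuple R) (lam lamh : R) (s : 'I_N -> R) (sh : 'I_Nh -> R) : Prop :=
  forall i j l,
    (ereal_sup [set (ell alpha p beta x l - lam * pnorm q (vsub (X i) x)
                     - lamh * pnorm q (vsub (Xh j) x))%:E | x in [set: n.-tuple R]]
     <= (rhs kappa lam lamh s sh Y Yh i j l)%:E)%E.

Definition value_star n N Nh (kappa alpha eps epsh : R) (p q : \bar R)
  (X : 'I_N -> n.-tuple R) (Y : 'I_N -> bool)
  (Xh : 'I_Nh -> n.-tuple R) (Yh : 'I_Nh -> bool) : \bar R :=
  ereal_inf [set v | exists (beta : n.-tuple R) (lam lamh : R)
      (s : 'I_N -> R) (sh : 'I_Nh -> R) (z : 'I_N -> 'I_Nh -> bool -> n.-tuple R),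
    feasible_star kappa alpha p q X Y Xh Yh beta lam lamh s sh z /\
    v = (obj eps epsh lam lamh s sh)%:E].

Definition value_aro n N Nh (kappa alpha eps epsh : R) (p q : \bar R)
  (X : 'I_N -> n.-tuple R) (Y : 'I_N -> bool)
  (Xh : 'I_Nh -> n.-tuple R) (Yh : 'I_Nh -> bool) : \bar R :=
  ereal_inf [set ereal_sup [set expect_loss alpha p beta Q |
      Q in [set Q : probability (Xi n) R |
              in_balls kappa q eps epsh X Y Xh Yh Q]]
    | beta in [set: n.-tuple R]].

End defs.

(* By Hoelder, the dual-norm constraints on [l beta - z] and [z] bound the
   linear form [(l beta - z)^T (x - x^i) + z^T (x - xh^j)] below by
   [- lam |x^i - x|_q - lamh |xh^j - x|_q].  As [L^alpha] is nonincreasing and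
   [L^alpha (t - c) <= L^alpha t + c] for [c >= 0], each finite constraint of
   Inter-ARO* yields the semi-infinite constraint at every [x].  As the label
   part of [d] is exactly [kappa (1 - l y) / 2], this says
   [ell_beta xi <= min_i (s_i + lam d(xi, xi^i)) + min_j (sh_j + lamh d(xi, xh^j))].
   Integrating against [Q] and transporting each minimum along a coupling of
   [Q] with the corresponding empirical measure whose cost is within [delta] of
   the Wasserstein bound gives [E_Q ell_beta <= obj + (lam + lamh) delta]. *)

From HB Require Import structures.
From mathcomp Require Import all_boot all_order all_algebra.
From mathcomp Require Import all_classical all_reals all_analysis.
From mathcomp Require Import ring lra.
From mathcomp Require Import measurable_realfun.
Import Order.TTheory GRing.Theory Num.Theory.
Import numFieldNormedType.Exports.
Set Implicit Arguments.
Unset Strict Implicit.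
Unset Printing Implicit Defensive.
Local Open Scope classical_set_scope.
Local Open Scope ring_scope.

Section hoelder_sum.
Context {R : realType}.

Definition zero_ext n (c : 'I_n -> R) (k : nat) : R :=
  if insub k is Some i then c i else 0.

Lemma zero_ext_ord n (c : 'I_n -> R) (i : 'I_n) : zero_ext c i = c i.
Proof. by rewrite /zero_ext valK. Qed.

Lemma zero_ext_out n (c : 'I_n -> R) k : (n <= k)%N -> zero_ext c k = 0.
Proof. by move=> nk; rewrite /zero_ext insubF // ltnNge nk. Qed.

Lemma nneseries_zero_ext n (c : 'I_n -> R) (F : R -> R) :
  F 0 = 0 -> (forall x, 0 <= F x) ->
  (\sum_(0 <= k <oo) (F (zero_ext c k))%:E)%E = (\sum_(i < n) F (c i))%:E.
Proof.
move=> F0 F_ge0.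
rewrite (nneseries_split 0 n); last by move=> k _; rewrite lee_fin.
rewrite add0n ereal_series_cond eseries0 ?adde0; last first.
  by move=> k _ /andP[nk _]; rewrite zero_ext_out // F0.
rewrite big_mkord sumEFin; congr (_%:E); apply: eq_bigr => i _.
by rewrite zero_ext_ord.
Qed.

(* Hoelder's inequality for the counting measure, read on finitely supported
   sequences. *)
Lemma hoelder_sum n (a b : 'I_n -> R) (p q : R) :
  (forall i, 0 <= a i) -> (forall i, 0 <= b i) ->
  0 < p -> 0 < q -> p^-1 + q^-1 = 1 ->
  \sum_i a i * b i <= (\sum_i a i `^ p) `^ p^-1 * (\sum_i b i `^ q) `^ q^-1.
Proof.
move=> a_ge0 b_ge0 p0 q0 pq.
have mext (c : 'I_n -> R) : measurable_fun setT (zero_ext c) by [].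
have := hoelder counting (mext a) (mext b) p0 q0 pq.
rewrite !Lnorm_counting //.
have series_pow (c : 'I_n -> R) r : (forall i, 0 <= c i) -> 0 < r ->
    (\sum_(0 <= k <oo) `|(EFin \o zero_ext c) k| `^ r)%E = (\sum_i c i `^ r)%:E.
  move=> c_ge0 r0.
  have -> : \sum_i c i `^ r = \sum_i `|c i| `^ r.
    by apply: eq_bigr => i _; rewrite ger0_norm.
  by rewrite -(nneseries_zero_ext (F := fun x => `|x| `^ r) c) // normr0 powR0 // gt_eqF.
have ab_ge0 i : 0 <= a i * b i by rewrite mulr_ge0.
have zero_extM k : (zero_ext a \* zero_ext b)%R k = zero_ext (fun i => a i * b i) k.
  by rewrite /zero_ext /=; case: insub => [i|] //=; rewrite mulr0.
have -> : (\sum_(0 <= k <oo) `|(EFin \o (zero_ext a \* zero_ext b)%R) k| `^ 1)%E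
    = (\sum_i (a i * b i) `^ 1)%:E.
  by rewrite -(series_pow _ _ ab_ge0 ltr01); apply: eq_eseriesr => k _ /=; rewrite -zero_extM.
rewrite (series_pow _ _ a_ge0 p0).
rewrite (series_pow _ _ b_ge0 q0) !poweR_EFin -EFinM lee_fin invr1.
rewrite powRr1; last by rewrite sumr_ge0 // => i _; rewrite powR_ge0.
by under eq_bigr do rewrite powRr1 //.
Qed.

End hoelder_sum.

Section pnorm.
Context {R : realType}.
Implicit Types (n : nat) (p q : \bar R).

Lemma pnorm_ge0 n p (x : n.-tuple R) : 0 <= pnorm p x.
Proof.
case: p => [r| |] /=; first exact: powR_ge0.
all: by elim/big_ind: _ => // a b a0 _; rewrite le_max a0.
Qed.

Lemma pnorm1 n (x : n.-tuple R) : pnorm 1%:E x = \sum_i `|tnth x i|.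
Proof.
rewrite /= invr1 powRr1; last by rewrite sumr_ge0 // => i _; rewrite powR_ge0.
by apply: eq_bigr => i _; rewrite powRr1.
Qed.

Lemma le_pnormy n (x : n.-tuple R) i : `|tnth x i| <= pnorm +oo%E x.
Proof. exact: le_bigmax. Qed.

Lemma pnorm_eq_abs n p (x y : n.-tuple R) :
  (forall i, `|tnth x i| = `|tnth y i|) -> pnorm p x = pnorm p y.
Proof.
move=> xy; case: p => [r| |] /=; first congr (_ `^ _).
all: by apply: eq_bigr => i _; rewrite xy.
Qed.

Lemma pnorm_vsubC n p (x y : n.-tuple R) : pnorm p (vsub x y) = pnorm p (vsub y x).
Proof. by apply: pnorm_eq_abs => i; rewrite !tnth_mktuple distrC. Qed.

Lemma dual_exp_conjugate (r : R) : 1 < r -> (r / (r - 1))^-1 + r^-1 = 1.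
Proof.
move=> r1; have r0 : r != 0 by rewrite gt_eqF // (lt_trans ltr01).
have r10 : r - 1 != 0 by rewrite subr_eq0 gt_eqF.
by rewrite invf_div; field.
Qed.

Lemma hoelder_dot n q (u v : n.-tuple R) : (1%:E <= q)%E ->
  `|dot u v| <= pnorm (dual_exp q) u * pnorm q v.
Proof.
move=> q1; have dot_le : `|dot u v| <= \sum_i `|tnth u i| * `|tnth v i|.
  rewrite /dot; apply: le_trans (ler_norm_sum _ _ _) _.
  by apply: ler_sum => i _; rewrite normrM.
apply: (le_trans dot_le); case: q q1 => [r| |] //=; rewrite ?lee_fin => r1.
- have [->|r_neq1] := eqVneq r 1.
    rewrite -/(pnorm 1%:E v) pnorm1 mulr_sumr.
    by apply: ler_sum => i _; rewrite ler_wpM2r // le_pnormy.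
  have r_gt1 : 1 < r by rewrite lt_neqAle eq_sym r_neq1 r1.
  apply: hoelder_sum => //; last exact: dual_exp_conjugate.
  + by rewrite divr_gt0 ?subr_gt0 // (lt_trans ltr01).
  + exact: lt_trans ltr01 r_gt1.
- rewrite -/(pnorm 1%:E u) pnorm1 mulr_suml.
  by apply: ler_sum => i _; rewrite ler_wpM2l // le_pnormy.
Qed.

Lemma dot_ge_Npnorm n q (u v : n.-tuple R) (lam : R) : (1%:E <= q)%E ->
  pnorm (dual_exp q) u <= lam -> - (lam * pnorm q v) <= dot u v.
Proof.
move=> q1 u_le; rewrite lerNl; apply: le_trans (ler_norm _) _.
rewrite normrN; apply: le_trans (hoelder_dot u v q1) _.
by rewrite ler_wpM2r // pnorm_ge0.
Qed.

End pnorm.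

Section logistic_loss.
Context {R : realType}.
Variables (n : nat) (alpha : R) (p : \bar R) (beta : n.-tuple R).

Lemma Lalpha_ge0 z : 0 <= Lalpha alpha p beta z.
Proof. by rewrite /Lalpha ln_ge0 // lerDl ltW // expR_gt0. Qed.

Lemma Lalpha_nonincreasing z1 z2 : z1 <= z2 -> Lalpha alpha p beta z2 <= Lalpha alpha p beta z1.
Proof.
move=> z12; rewrite /Lalpha ler_ln ?posrE ?addr_gt0 ?expR_gt0 //.
by rewrite lerD2l ler_expR lerD2r lerN2.
Qed.

(* ln(1 + e^(w + c)) <= ln((1 + e^w) e^c) for c >= 0 *)
Lemma LalphaB_le z c :
  0 <= c -> Lalpha alpha p beta (z - c) <= Lalpha alpha p beta z + c.
Proof.
move=> c0; rewrite /Lalpha; set w := alpha * _.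
rewrite -{2}(expRK c) -lnM ?posrE ?addr_gt0 ?expR_gt0 //.
rewrite ler_ln ?posrE ?mulr_gt0 ?addr_gt0 ?expR_gt0 // mulrDl mul1r -expRD.
have -> : - (z - c) + w = - z + w + c by ring.
by rewrite lerD2r -expR0 ler_expR.
Qed.

End logistic_loss.

Section pointwise_bound.
Context {R : realType}.
Variables (n : nat) (alpha : R) (p q : \bar R) (beta : n.-tuple R).
Hypothesis q_ge1 : (1%:E <= q)%E.

Lemma dot_split (l : R) (x x0 xh z : n.-tuple R) :
  l * dot beta x - (l * dot beta x0 + dot z (vsub xh x0)) =
  dot (vsub (vscale l beta) z) (vsub x x0) + dot z (vsub x xh).
Proof.
rewrite /dot !mulr_sumr -big_split -sumrB -big_split /=.
by apply: eq_bigr => i _; rewrite !tnth_mktuple; ring.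
Qed.

Lemma ell_penalized_le (x0 xh z x : n.-tuple R) (l : bool) (lam lamh b : R) :
  Lalpha alpha p beta (lab R l * dot beta x0 + dot z (vsub xh x0)) <= b ->
  pnorm (dual_exp q) (vsub (vscale (lab R l) beta) z) <= lam ->
  pnorm (dual_exp q) z <= lamh ->
  ell alpha p beta x l - lam * pnorm q (vsub x0 x) - lamh * pnorm q (vsub xh x)
    <= b.
Proof.
move=> Lb z1_le z2_le.
set z0 := lab R l * dot beta x0 + dot z (vsub xh x0).
set c := lam * pnorm q (vsub x0 x) + lamh * pnorm q (vsub xh x).
have lam_ge0 : 0 <= lam := le_trans (pnorm_ge0 _ _) z1_le.
have lamh_ge0 : 0 <= lamh := le_trans (pnorm_ge0 _ _) z2_le.
have c_ge0 : 0 <= c by rewrite addr_ge0 // mulr_ge0 ?pnorm_ge0.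
have z0_le : z0 - c <= lab R l * dot beta x.
  rewrite lerBlDr -lerBlDl -lerN2 opprB dot_split /c opprD.
  rewrite (pnorm_vsubC _ x0) (pnorm_vsubC _ xh).
  by apply: lerD; exact: dot_ge_Npnorm.
rewrite -addrA -opprD -/c lerBlDr.
apply: le_trans (Lalpha_nonincreasing alpha p beta z0_le) _.
by apply: le_trans (LalphaB_le alpha p beta z0 c_ge0) _; rewrite lerD2r.
Qed.

End pointwise_bound.

Section measurability.
Context {R : realType}.
Implicit Types (n : nat) (p q : \bar R).

Lemma measurable_bigmaxr d (T : measurableType d) (I : Type) (r : seq I)
    (f : I -> T -> R) : (forall i, measurable_fun setT (f i)) ->
  measurable_fun setT (fun t => \big[Num.max/0]_(i <- r) f i t).
Proof.
move=> mf; elim: r => [|i r IHr].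
  by under eq_fun do rewrite big_nil; exact: measurable_cst.
by under eq_fun do rewrite big_cons; exact: measurable_maxr.
Qed.

Lemma measurable_pnorm d (T : measurableType d) n p (F : T -> n.-tuple R) :
  (forall i, measurable_fun setT (fun t => tnth (F t) i)) ->
  measurable_fun setT (fun t => pnorm p (F t)).
Proof.
move=> mF; have mabs i : measurable_fun setT (fun t => `|tnth (F t) i|).
  exact: measurableT_comp (@normr_measurable R setT) (mF i).
case: p => [r| |] /=; last 2 first.
1,2: exact: measurable_bigmaxr.
apply: measurableT_comp (measurable_powR _) _.
by apply: measurable_sum => i; exact: measurableT_comp (measurable_powR _) _.
Qed.

Lemma measurable_cost n (kappa : R) q :
  measurable_fun setT (fun z : Xi R n * Xi R n => cost kappa q z.1 z.2).
Proof.
apply: measurable_funD.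
  apply: measurable_pnorm => i; under eq_fun do rewrite tnth_mktuple.
  apply: measurable_funB.
  + exact: measurableT_comp (measurable_tnth i) (measurableT_comp measurable_fst measurable_fst).
  + exact: measurableT_comp (measurable_tnth i) (measurableT_comp measurable_fst measurable_snd).
apply: measurable_funM; first exact: measurable_cst.
have neq_dist (a b : bool) : (a != b)%:R = `|a%:R - b%:R| :> R.
  by case: a; case: b; rewrite /= ?subrr ?normr0 ?subr0 ?normr1 // sub0r normrN normr1.
under eq_fun do rewrite neq_dist.
apply: measurableT_comp (@normr_measurable R setT) _.
have mnat : measurable_fun setT (fun b : bool => b%:R : R) by [].
apply: measurable_funB; apply: measurableT_comp mnat _.
+ exact: measurableT_comp measurable_snd measurable_fst.
+ exact: measurableT_comp measurable_snd measurable_snd.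
Qed.

Lemma measurable_cost_l n (kappa : R) q (b : Xi R n) :
  measurable_fun setT (fun a : Xi R n => cost kappa q a b).
Proof.
have -> : (fun a => cost kappa q a b) =
    (fun z : Xi R n * Xi R n => cost kappa q z.1 z.2) \o (fun a => (a, b)) by [].
apply: measurableT_comp; first exact: measurable_cost.
by apply: measurable_fun_pair => //; exact: measurable_cst.
Qed.

Lemma measurable_ell n (alpha : R) p (beta : n.-tuple R) :
  measurable_fun setT (fun a : Xi R n => ell alpha p beta a.1 a.2).
Proof.
apply: measurableT_comp (@measurable_ln R) _.
apply: measurable_funD; first exact: measurable_cst.
apply: measurableT_comp (@measurable_expR R) _.
apply: measurable_funD; last exact: measurable_cst.
apply/measurable_funN/measurable_funM.
  have mlab : measurable_fun setT (lab R) by [].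
  exact: measurableT_comp mlab measurable_snd.
apply: measurable_sum => k; apply: measurable_funM; first exact: measurable_cst.
exact: measurableT_comp (measurable_tnth k) measurable_fst.
Qed.

Lemma measurable_set1_tuple n (x : n.-tuple R) : measurable [set x].
Proof.
have -> : [set x] = \bigcap_(i in [set: 'I_n]) ((tnth (T:=R))^~ i @^-1` [set tnth x i]).
  apply/seteqP; split => [y -> i _ //|y xy].
  by apply: eq_from_tnth => i; exact: xy.
apply: fin_bigcap_measurable; first exact: finite_finset.
move=> i _; rewrite -[X in measurable X]setTI.
exact: measurable_tnth (measurable_set1 _).
Qed.

Lemma measurable_set1_Xi n (a : Xi R n) : measurable [set a].
Proof.
have -> : [set a] = [set a.1] `*` [set a.2].
  by apply/seteqP; split => [[x y] -> | [x y] /= [-> ->]] //; case: a.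
exact: measurableX (measurable_set1_tuple _) _.
Qed.

End measurability.

Section marginal_integral.
Context {R : realType} d1 d2 (T1 : measurableType d1) (T2 : measurableType d2).
Local Open Scope ereal_scope.

Lemma ge0_integral_fst (mu : {measure set T1 -> \bar R})
    (pi : {measure set (T1 * T2) -> \bar R}) (f : T1 -> \bar R) :
  (forall A, measurable A -> pi (A `*` setT) = mu A) ->
  measurable_fun setT f -> (forall x, 0 <= f x) ->
  \int[mu]_x f x = \int[pi]_z f z.1.
Proof.
move=> pi_fst mf f_ge0.
have -> : \int[mu]_x f x = \int[pushforward pi fst]_x f x.
  apply: eq_measure_integral => A mA _ /=; rewrite -pi_fst //.
  rewrite /pushforward; congr (pi _); apply/seteqP; split => [[x y] /= []|[x y]] //.
by rewrite ge0_integral_pushforward.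
Qed.

End marginal_integral.

Lemma cost_ge0 {R : realType} n (kappa : R) (q : \bar R) (a b : Xi R n) :
  0 <= kappa -> 0 <= cost kappa q a b.
Proof. by move=> kappa_ge0; rewrite addr_ge0 ?pnorm_ge0 // mulr_ge0. Qed.

Lemma indic_set1 {R : realType} (T : eqType) (a b : T) :
  \1_[set a] b = (b == a)%:R :> R.
Proof.
rewrite indicE; have [->|ba] := eqVneq b a; first by rewrite mem_set.
by rewrite memNset // => /= ba'; rewrite ba' eqxx in ba.
Qed.

Section empirical_transport.
Context {R : realType}.
Variables (n N : nat) (xi : 'I_N -> Xi R n) (s : 'I_N -> R) (lam kappa : R)
  (q : \bar R).
Hypotheses (lam_ge0 : 0 <= lam) (s_ge0 : forall i, 0 <= s i)
  (kappa_ge0 : 0 <= kappa).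

Definition penalty (i : 'I_N) (a : Xi R n) : R := s i + lam * cost kappa q a (xi i).

(* [i0] only supplies the seed of the fold; the value is [min_i penalty i a]. *)
Definition min_penalty (i0 : 'I_N) (a : Xi R n) : R :=
  \big[Num.min/penalty i0 a]_i penalty i a.

Lemma penalty_ge0 i a : 0 <= penalty i a.
Proof. by rewrite addr_ge0 // mulr_ge0 // cost_ge0. Qed.

Lemma min_penalty_le i0 a i : min_penalty i0 a <= penalty i a.
Proof. exact: bigmin_le. Qed.

Lemma min_penalty_ge0 i0 a : 0 <= min_penalty i0 a.
Proof. by apply: le_bigmin => [|i _]; exact: penalty_ge0. Qed.

Lemma measurable_penalty i : measurable_fun setT (penalty i).
Proof.
apply: measurable_funD; first exact: measurable_cst.
by apply: measurable_funM; [exact: measurable_cst|exact: measurable_cost_l].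
Qed.

Lemma measurable_min_penalty i0 : measurable_fun setT (min_penalty i0).
Proof.
rewrite /min_penalty; elim: (index_enum _) => [|i r IHr].
  by under eq_fun do rewrite big_nil; exact: measurable_penalty.
by under eq_fun do rewrite big_cons; exact: measurable_minr (measurable_penalty i) IHr.
Qed.

Definition multiplicity (i : 'I_N) : R := \sum_k (xi k == xi i)%:R.

(* Spreads [s i] evenly over the atoms of [xi] that coincide with [xi i], so
   that integrating against the empirical measure gives the average of [s]. *)
Definition atom_weight (b : Xi R n) : R :=
  \sum_i s i / multiplicity i * (b == xi i)%:R.

Lemma multiplicity_gt0 i : 0 < multiplicity i.
Proof.
by rewrite /multiplicity (bigD1 i) //= eqxx ltr_pwDl // sumr_ge0.
Qed.

Lemma atom_weight_ge0 b : 0 <= atom_weight b.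
Proof.
by apply: sumr_ge0 => i _; rewrite mulr_ge0 ?divr_ge0 ?(ltW (multiplicity_gt0 i)).
Qed.

Lemma measurable_atom_weight : measurable_fun setT atom_weight.
Proof.
apply: measurable_sum => i; apply: measurable_funM; first exact: measurable_cst.
under eq_fun do rewrite -indic_set1.
by apply: measurable_indic; exact: measurable_set1_Xi.
Qed.

(* [multiplicity k * min_penalty] is a sum of [multiplicity k] copies of the
   minimum, each bounded by the corresponding penalty. *)
Lemma min_penalty_le_atom_weight i0 a k :
  min_penalty i0 a <= atom_weight (xi k) + lam * cost kappa q a (xi k).
Proof.
have mk_gt0 := multiplicity_gt0 k.
have sum_penalty : \sum_i (xi i == xi k)%:R * penalty i a =
    multiplicity k * (atom_weight (xi k) + lam * cost kappa q a (xi k)).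
  rewrite /atom_weight /multiplicity mulrDr mulr_sumr mulr_suml -big_split /=.
  apply: eq_bigr => i _; rewrite [xi k == _]eq_sym.
  have [ki|_] := eqVneq (xi k) (xi i); last by rewrite !(mul0r, mulr0, addr0).
  rewrite !mulr1 !mul1r /penalty -ki -/(multiplicity k).
  by rewrite mulrCA mulfV ?mulr1 // gt_eqF.
rewrite -(ler_pM2l mk_gt0) -sum_penalty /multiplicity mulr_suml.
apply: ler_sum => i _.
by case: eqP => _; rewrite ?mul1r ?mul0r // min_penalty_le.
Qed.

Section coupling.
Variables (Q : probability (Xi R n) R) (pi : probability (Xi R n * Xi R n)%type R).
Hypothesis pi_coupling : coupling pi Q (empirical xi).
Local Open Scope ereal_scope.

Lemma coupling_set1 i : pi (setT `*` [set xi i]) = (N%:R^-1 * multiplicity i)%:E.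
Proof.
rewrite (proj2 (pi_coupling (measurable_set1_Xi (xi i)))) /empirical /multiplicity.
rewrite EFinM -sumEFin; congr (_ * _); apply: eq_bigr => k _.
by rewrite diracE -indic_set1 indicE.
Qed.

Lemma integral_atom_weight :
  \int[pi]_z (atom_weight z.2)%:E = (N%:R^-1 * \sum_i s i)%:E.
Proof.
have indic_snd i (z : Xi R n * Xi R n) :
    (z.2 == xi i)%:R = \1_(setT `*` [set xi i]) z :> R.
  by rewrite -indic_set1 !indicE in_setX in_setT.
have mX i : measurable (setT `*` [set xi i]) := measurableX measurableT (measurable_set1_Xi _).
rewrite /atom_weight; under eq_integral do under eq_bigr do rewrite indic_snd.
under eq_integral do rewrite -sumEFin.
rewrite ge0_integral_sum //; last 2 first.
- move=> i; apply/measurable_EFinP; apply: measurable_funM; first exact: measurable_cst.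
  by apply: measurable_indic; exact: mX.
- by move=> i z _; rewrite lee_fin mulr_ge0 ?divr_ge0 ?(ltW (multiplicity_gt0 i)).
rewrite mulr_sumr -sumEFin; apply: eq_bigr => i _.
under eq_integral do rewrite EFinM.
rewrite ge0_integralZl //; last 2 first.
- by apply/measurable_EFinP; apply: measurable_indic; exact: mX.
- by rewrite lee_fin divr_ge0 ?(ltW (multiplicity_gt0 i)).
rewrite integral_indic //; last exact: mX.
rewrite setIT [X in (_ * X)%E](_ : _ = (N%:R^-1 * multiplicity i)%:E); last exact: coupling_set1.
rewrite -EFinM; congr (_%:E).
by rewrite mulrCA -mulrA mulVf ?mulr1 1?mulrC // gt_eqF // multiplicity_gt0.
Qed.

Lemma measurable_range_xi : measurable (range xi).
Proof.
have -> : range xi = \bigcup_(i in [set: 'I_N]) [set xi i].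
  by apply/seteqP; split => [_ [i _ <-]|_ [i _ ->]]; exists i.
apply: fin_bigcup_measurable; first exact: finite_finset.
by move=> i _; exact: measurable_set1_Xi.
Qed.

Lemma coupling_ae_range : {ae pi, forall z, range xi z.2}.
Proof.
exists (setT `*` ~` range xi); split.
- exact: measurableX measurableT (measurableC measurable_range_xi).
- rewrite (proj2 (pi_coupling (measurableC measurable_range_xi))) /empirical.
  by rewrite big1 ?mule0 // => k _; rewrite diracE memNset //= => /(_ (imageT _ k)).
- by move=> [a b] /= b_out; split.
Qed.

Lemma integral_min_penalty_fst_le i0 :
  \int[pi]_z (min_penalty i0 z.1)%:E <=
  \int[pi]_z (atom_weight z.2 + lam * cost kappa q z.1 z.2)%:E.
Proof.
have mcost := @measurable_cost R n kappa q.
apply: ae_ge0_le_integral => //.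
- by move=> z _; rewrite lee_fin min_penalty_ge0.
- apply/measurable_EFinP; exact: measurableT_comp (measurable_min_penalty i0) _.
- by move=> z _; rewrite lee_fin addr_ge0 ?atom_weight_ge0 // mulr_ge0 // cost_ge0.
- apply/measurable_EFinP/measurable_funD.
    exact: measurableT_comp measurable_atom_weight _.
  by apply: measurable_funM; first exact: measurable_cst.
apply: filterS coupling_ae_range => -[a b] [k _ /= xi_k] _.
by rewrite /= -xi_k lee_fin min_penalty_le_atom_weight.
Qed.

Lemma integral_min_penalty_le i0 :
  \int[Q]_a (min_penalty i0 a)%:E <=
  (N%:R^-1 * \sum_i s i)%:E + lam%:E * \int[pi]_z (cost kappa q z.1 z.2)%:E.
Proof.
have mcost := @measurable_cost R n kappa q.
rewrite (@ge0_integral_fst _ _ _ _ _ Q pi); first last.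
- by move=> a; rewrite lee_fin min_penalty_ge0.
- by apply/measurable_EFinP; exact: measurable_min_penalty.
- by move=> A mA; exact: (proj1 (pi_coupling mA)).
apply: le_trans (integral_min_penalty_fst_le i0) _.
under eq_integral do rewrite EFinD EFinM.
rewrite ge0_integralD //; last 4 first.
- by move=> z _; rewrite lee_fin atom_weight_ge0.
- by apply/measurable_EFinP; exact: measurableT_comp measurable_atom_weight _.
- by move=> z _; rewrite mule_ge0 // lee_fin cost_ge0.
- under eq_fun do rewrite -EFinM.
  by apply/measurable_EFinP/measurable_funM; first exact: measurable_cst.
rewrite ge0_integralZl //; last 2 first.
- by apply/measurable_EFinP.
- by move=> z _; rewrite lee_fin cost_ge0.
by rewrite integral_atom_weight.
Qed.

End coupling.

End empirical_transport.

Lemma W_le_coupling {R : realType} n (kappa : R) (q : \bar R)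
    (Q P : set (Xi R n) -> \bar R) (e d : R) :
  0 < d -> (W kappa q Q P <= e%:E)%E ->
  exists2 pi : probability (Xi R n * Xi R n)%type R,
    coupling pi Q P & (\int[pi]_z (cost kappa q z.1 z.2)%:E <= (e + d)%:E)%E.
Proof.
move=> d_gt0 W_le; have : (W kappa q Q P < (e + d)%:E)%E.
  by apply: le_lt_trans W_le _; rewrite lte_fin ltrDl.
by move=> /ereal_inf_lt [_ [pi [pi_coupling ->]] pi_lt]; exists pi => //; exact: ltW.
Qed.

Lemma lab_mismatch {R : realType} (kappa : R) (l y : bool) :
  kappa * (1 - lab R l * lab R y) / 2 = kappa * (l != y)%:R.
Proof. by case: l; case: y; rewrite /lab /=; field. Qed.

Section feasible_point.
Context {R : realType}.
Variables (n N Nh : nat) (kappa alpha : R) (p q : \bar R)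
  (X : 'I_N -> n.-tuple R) (Y : 'I_N -> bool)
  (Xh : 'I_Nh -> n.-tuple R) (Yh : 'I_Nh -> bool)
  (beta : n.-tuple R) (lam lamh : R) (s : 'I_N -> R) (sh : 'I_Nh -> R)
  (z : 'I_N -> 'I_Nh -> bool -> n.-tuple R).
Hypotheses (kappa_ge0 : 0 <= kappa) (q_ge1 : (1%:E <= q)%E).
Hypothesis star_feasible : feasible_star kappa alpha p q X Y Xh Yh beta lam lamh s sh z.

Let xi i := (X i, Y i).
Let xih j := (Xh j, Yh j).

Lemma semi_infinite_feasible_star :
  semi_infinite_feasible kappa alpha p q X Y Xh Yh beta lam lamh s sh.
Proof.
move=> i j l; apply: ge_ereal_sup => _ [x _ <-].
have [_ [_ [_ [_ constraints]]]] := star_feasible.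
have [Lb [z1_le z2_le]] := constraints i j l.
by rewrite lee_fin; exact: (ell_penalized_le q_ge1 x Lb z1_le z2_le).
Qed.

Lemma ell_le_penalty (a : Xi R n) i j :
  ell alpha p beta a.1 a.2 <=
  penalty xi s lam kappa q i a + penalty xih sh lamh kappa q j a.
Proof.
have [_ [_ [_ [_ constraints]]]] := star_feasible.
have [Lb [z1_le z2_le]] := constraints i j a.2.
have := ell_penalized_le q_ge1 a.1 Lb z1_le z2_le.
rewrite /rhs /penalty /cost !lab_mismatch (pnorm_vsubC _ a.1) (pnorm_vsubC _ a.1).
by rewrite !lerBlDr => /le_trans; apply; rewrite /=; lra.
Qed.

Lemma ell_le_min_penalty (a : Xi R n) i0 j0 :
  ell alpha p beta a.1 a.2 <=
  min_penalty xi s lam kappa q i0 a + min_penalty xih sh lamh kappa q j0 a.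
Proof.
have min_le i : ell alpha p beta a.1 a.2 - penalty xi s lam kappa q i a <=
    min_penalty xih sh lamh kappa q j0 a.
  by apply: le_bigmin => [|j _]; rewrite lerBlDl ell_le_penalty.
by rewrite -lerBlDr; apply: le_bigmin => [|i _]; rewrite lerBlDr addrC -lerBlDr.
Qed.

Lemma expect_loss_le_min_penalty (Q : probability (Xi R n) R) i0 j0 :
  (expect_loss alpha p beta Q <=
   \int[Q]_a (min_penalty xi s lam kappa q i0 a)%:E +
   \int[Q]_a (min_penalty xih sh lamh kappa q j0 a)%:E)%E.
Proof.
have [lam_ge0 [lamh_ge0 [s_ge0 [sh_ge0 _]]]] := star_feasible.
have G_ge0 a : (0 <= (min_penalty xi s lam kappa q i0 a)%:E)%E.
  by rewrite lee_fin min_penalty_ge0.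
have Gh_ge0 a : (0 <= (min_penalty xih sh lamh kappa q j0 a)%:E)%E.
  by rewrite lee_fin min_penalty_ge0.
have mG : measurable_fun setT (fun a => (min_penalty xi s lam kappa q i0 a)%:E).
  by apply/measurable_EFinP; exact: measurable_min_penalty.
have mGh : measurable_fun setT (fun a => (min_penalty xih sh lamh kappa q j0 a)%:E).
  by apply/measurable_EFinP; exact: measurable_min_penalty.
rewrite -ge0_integralD //.
apply: ge0_le_integral => //.
- by move=> a _; rewrite lee_fin Lalpha_ge0.
- by apply/measurable_EFinP; exact: measurable_ell.
- exact: emeasurable_funD.
- by move=> a _; rewrite -EFinD lee_fin ell_le_min_penalty.
Qed.

Lemma expect_loss_le_obj (eps epsh : R) (Q : probability (Xi R n) R) :
  (0 < N)%N -> (0 < Nh)%N -> in_balls kappa q eps epsh X Y Xh Yh Q ->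
  (expect_loss alpha p beta Q <= (obj eps epsh lam lamh s sh)%:E)%E.
Proof.
move=> N_gt0 Nh_gt0 [_ [W_le W_leh]].
have [lam_ge0 [lamh_ge0 [s_ge0 [sh_ge0 _]]]] := star_feasible.
pose i0 := Ordinal N_gt0; pose j0 := Ordinal Nh_gt0.
apply/lee_addgt0Pr => e e_gt0.
pose d := e / (lam + lamh + 1).
have d_gt0 : 0 < d by rewrite divr_gt0 // ltr_wpDl // addr_ge0.
have [pi pi_coupling pi_cost] := W_le_coupling d_gt0 W_le.
have [pih pih_coupling pih_cost] := W_le_coupling d_gt0 W_leh.
have G_le := integral_min_penalty_le q lam_ge0 s_ge0 kappa_ge0 pi_coupling i0.
have Gh_le := integral_min_penalty_le q lamh_ge0 sh_ge0 kappa_ge0 pih_coupling j0.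
apply: le_trans (expect_loss_le_min_penalty Q i0 j0) _.
apply: le_trans (leeD G_le Gh_le) _.
have lamE_ge0 : (0 <= lam%:E)%E by rewrite lee_fin.
have lamhE_ge0 : (0 <= lamh%:E)%E by rewrite lee_fin.
have cost_le := lee_wpmul2l lamE_ge0 pi_cost.
have costh_le := lee_wpmul2l lamhE_ge0 pih_cost.
apply: le_trans (leeD (leeD (lexx _) cost_le) (leeD (lexx _) costh_le)) _.
have de_le : (lam + lamh) * d <= e.
  rewrite /d mulrA ler_pdivrMr ?ltr_wpDl ?addr_ge0 //.
  by rewrite mulrC ler_pM2l // lerDl.
by rewrite -!EFinM -!EFinD lee_fin /obj; lra.
Qed.

End feasible_point.

Unset Implicit Arguments.
Theorem theorem1 (R : realType) (n N Nh : nat)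
  (kappa alpha eps epsh : R) (p q : \bar R)
  (X : 'I_N -> n.-tuple R) (Y : 'I_N -> bool)
  (Xh : 'I_Nh -> n.-tuple R) (Yh : 'I_Nh -> bool) :
  0 <= kappa -> 0 <= alpha -> (1%:E <= p)%E -> (1%:E <= q)%E ->
  0 <= eps -> 0 <= epsh -> (0 < N)%N -> (0 < Nh)%N ->
  (forall (beta : n.-tuple R) (lam lamh : R) (s : 'I_N -> R) (sh : 'I_Nh -> R)
          (z : 'I_N -> 'I_Nh -> bool -> n.-tuple R),
     feasible_star kappa alpha p q X Y Xh Yh beta lam lamh s sh z ->
     semi_infinite_feasible kappa alpha p q X Y Xh Yh beta lam lamh s sh /\
     (forall Q : probability (Xi R n) R,
        in_balls kappa q eps epsh X Y Xh Yh Q ->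
        (expect_loss alpha p beta Q <= (obj eps epsh lam lamh s sh)%:E)%E)) /\
  (value_aro kappa alpha eps epsh p q X Y Xh Yh
     <= value_star kappa alpha eps epsh p q X Y Xh Yh)%E.
Proof.
move=> kappa_ge0 _ _ q_ge1 _ _ N_gt0 Nh_gt0.
split=> [beta lam lamh s sh z feasible|].
  split; first exact: semi_infinite_feasible_star q_ge1 feasible.
  move=> Q; exact: (expect_loss_le_obj kappa_ge0 q_ge1 feasible N_gt0 Nh_gt0).
apply: le_ereal_inf_tmp => _ [beta [lam [lamh [s [sh [z [feasible ->]]]]]]].
apply: le_trans (ereal_inf_lbound _) _; first by exists beta.
apply: ge_ereal_sup => _ [Q ballsQ <-].
exact: (expect_loss_le_obj kappa_ge0 q_ge1 feasible N_gt0 Nh_gt0 ballsQ).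
Qed.
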